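(* Let $a_1,a_2\in\mathbb{R}$ with $|a_1a_2|=1$, $a_2>0$ and $a_1<0$, and let $$R=\begin{pmatrix} 1 & a_1 \\ a_2 & 1 \end{pmatrix}.$$ Then for every driving function $f$ the Skorokhod problem with matrix $R$ has a unique solution.
   Context: For $b=(b_1,b_2)\in\mathbb{R}^2$ write $b\ge 0$ if $b_1\ge 0$ and $b_2\ge 0$, and let $D=\{b\in\mathbb{R}^2: b\ge 0\}$. A driving function is a continuous function $f:[0,\infty)\to\mathbb{R}^2$ with $f(0)\ge 0$. Given a real $2\times 2$ matrix $R$ and a driving function $f$, a solution of the Skorokhod problem is a pair $(g,m)$ where (1) $g:[0,\infty)\to D$ is continuous; (2) $m=(m_1,m_2):[0,\infty)\to\mathbb{R}^2$ is continuous with $m(0)=0$ and each $m_j$ non-decreasing; (3) $g(t)=f(t)+Rm(t)$ for all $t\ge 0$; and (4) for $j=1,2$, $m_j$ increases only when $g_j=0$, i.e. $\int_0^\infty g_j(t)\,dm_j(t)=0$. ''Unique solution'' means there is exactly one such pair $(g,m)$. *)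

(* concrete reals R. Functions on [0,oo) are represented as
   functions R -> R whose values for t < 0 are irrelevant. *)
From Stdlib Require Import Reals.
Open Scope R_scope.

Definition cont_nonneg (h : R -> R) : Prop :=
  forall t, 0 <= t -> forall eps, 0 < eps ->
    exists delta, 0 < delta /\
      forall s, 0 <= s -> Rabs (s - t) < delta -> Rabs (h s - h t) < eps.

Definition nondecr_nonneg (h : R -> R) : Prop :=
  forall s t, 0 <= s -> s <= t -> h s <= h t.

(* "m increases only when g = 0": whenever m strictly increases over [s,t],
   g vanishes somewhere in [s,t]  (for continuous g >= 0 and nondecreasing
   continuous m this is equivalent to  int_0^oo g dm = 0). *)
Definition increases_only_at_zero (g m : R -> R) : Prop :=
  forall s t, 0 <= s -> s <= t -> m s < m t ->
    exists u, s <= u <= t /\ g u = 0.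

Definition driving (f1 f2 : R -> R) : Prop :=
  cont_nonneg f1 /\ cont_nonneg f2 /\ 0 <= f1 0 /\ 0 <= f2 0.

Definition SP_solution (r11 r12 r21 r22 : R) (f1 f2 g1 g2 m1 m2 : R -> R)
  : Prop :=
  cont_nonneg g1 /\ cont_nonneg g2 /\
  (forall t, 0 <= t -> 0 <= g1 t /\ 0 <= g2 t) /\
  cont_nonneg m1 /\ cont_nonneg m2 /\ m1 0 = 0 /\ m2 0 = 0 /\
  nondecr_nonneg m1 /\ nondecr_nonneg m2 /\
  (forall t, 0 <= t ->
     g1 t = f1 t + (r11 * m1 t + r12 * m2 t) /\
     g2 t = f2 t + (r21 * m1 t + r22 * m2 t)) /\
  increases_only_at_zero g1 m1 /\ increases_only_at_zero g2 m2.

Definition SP_unique_solution (r11 r12 r21 r22 : R) (f1 f2 : R -> R) : Prop :=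
  (exists g1 g2 m1 m2, SP_solution r11 r12 r21 r22 f1 f2 g1 g2 m1 m2) /\
  (forall g1 g2 m1 m2 g1' g2' m1' m2',
     SP_solution r11 r12 r21 r22 f1 f2 g1 g2 m1 m2 ->
     SP_solution r11 r12 r21 r22 f1 f2 g1' g2' m1' m2' ->
     forall t, 0 <= t ->
       g1 t = g1' t /\ g2 t = g2' t /\ m1 t = m1' t /\ m2 t = m2' t).

(* Write c = -a1 = 1/a2 and compare a solution (m1, m2) for the upper-right matrix entry
   r with a solution (m1', m2') for the entry r', where a1 <= r, r' <= 0.  If m1 - m1' > 0 at
   time t, then at the last zero of g1 before t the difference c (m2 - m2') was at least
   as large, up to an error of order (r - a1) + (r' - a1); if c (m2 - m2') > 0 at time t,
   then at the last zero of g2 before t the difference m1' - m1 was at least as large.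
   So a large difference keeps changing sign backwards in time, and since all solutions
   are uniformly equicontinuous, each change takes a fixed amount of time: on a bounded
   interval the differences are small.  Taking r = r' = a1 gives uniqueness.  For
   a1 < r <= 0 the coupled reflection map is a contraction with constant -r a2 < 1, so
   solutions exist, and as r decreases to a1 they converge locally uniformly to a
   solution of the critical problem. *)

From Stdlib Require Import Reals Lra Lia ClassicalEpsilon.
Open Scope R_scope.

Lemma Rabs_le_iff x y : Rabs x <= y <-> - y <= x <= y.
Proof. unfold Rabs; destruct (Rcase_abs x); split; intros; lra. Qed.

Lemma Rabs_lt_iff x y : Rabs x < y <-> - y < x < y.
Proof. unfold Rabs; destruct (Rcase_abs x); split; intros; lra. Qed.

Lemma Req_of_Rabs_le_eps a b : (forall eps, 0 < eps -> Rabs (a - b) <= eps) -> a = b.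
Proof.
  intros H. destruct (Req_dec a b) as [|Hne]; [assumption|].
  assert (Hpos : 0 < Rabs (a - b)) by (apply Rabs_pos_lt; lra).
  specialize (H (Rabs (a - b) / 2)). lra.
Qed.

Lemma cont_nonneg_ext f g :
  (forall t, 0 <= t -> f t = g t) -> cont_nonneg f -> cont_nonneg g.
Proof.
  intros Efg Hf t Ht eps Heps.
  destruct (Hf t Ht eps Heps) as [d [Hd Hfd]].
  exists d; split; [assumption|]. intros s Hs Hst. rewrite <- !Efg by assumption. auto.
Qed.

Lemma cont_nonneg_const c : cont_nonneg (fun _ => c).
Proof.
  intros t _ eps Heps. exists 1; split; [lra|]. intros s _ _.
  rewrite Rminus_diag, Rabs_R0; assumption.
Qed.

Lemma cont_nonneg_plus f g :
  cont_nonneg f -> cont_nonneg g -> cont_nonneg (fun t => f t + g t).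
Proof.
  intros Hf Hg t Ht eps Heps.
  destruct (Hf t Ht (eps / 2)) as [d1 [Hd1 Hfd]]; [lra|].
  destruct (Hg t Ht (eps / 2)) as [d2 [Hd2 Hgd]]; [lra|].
  exists (Rmin d1 d2); split; [apply Rmin_pos; assumption|].
  intros s Hs Hst.
  specialize (Hfd s Hs (Rlt_le_trans _ _ _ Hst (Rmin_l _ _))).
  specialize (Hgd s Hs (Rlt_le_trans _ _ _ Hst (Rmin_r _ _))).
  apply Rabs_lt_iff in Hfd, Hgd. apply Rabs_lt_iff. lra.
Qed.

Lemma cont_nonneg_scal c f : cont_nonneg f -> cont_nonneg (fun t => c * f t).
Proof.
  intros Hf t Ht eps Heps.
  pose proof (Rabs_pos c) as Hc.
  set (e := eps / (Rabs c + 1)).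
  assert (He : 0 < e) by (apply Rdiv_lt_0_compat; lra).
  assert (Eeps : eps = e * (Rabs c + 1)) by (unfold e; field; lra).
  destruct (Hf t Ht e He) as [d [Hd Hfd]].
  exists d; split; [assumption|]. intros s Hs Hst.
  specialize (Hfd s Hs Hst).
  rewrite <- Rmult_minus_distr_l, Rabs_mult. nra.
Qed.

Lemma cont_nonneg_affine f g b :
  cont_nonneg f -> cont_nonneg g -> cont_nonneg (fun t => f t + b * g t).
Proof. intros Hf Hg. apply cont_nonneg_plus; [|apply cont_nonneg_scal]; assumption. Qed.

(* Stdlib's compactness results are stated for functions continuous on all of [R]. *)
Definition extend0 (f : R -> R) (s : R) : R := f (Rmax 0 s).

Lemma continuity_pt_extend0 f : cont_nonneg f -> forall c, continuity_pt (extend0 f) c.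
Proof.
  intros Hf c eps Heps.
  destruct (Hf (Rmax 0 c) (Rmax_l 0 c) eps Heps) as [d [Hd Hfd]].
  exists d; split; [lra|]. intros s [_ Hs]. simpl in *. unfold Rdist, extend0 in *.
  apply Hfd; [apply Rmax_l|].
  eapply Rle_lt_trans; [|exact Hs].
  unfold Rmax; destruct (Rle_dec 0 s), (Rle_dec 0 c);
    apply Rabs_le_iff; unfold Rabs; destruct (Rcase_abs (s - c)); lra.
Qed.

Lemma cont_nonneg_argmax f a b : cont_nonneg f -> 0 <= a <= b ->
  exists u, a <= u <= b /\ forall s, a <= s <= b -> f s <= f u.
Proof.
  intros Hf Hab.
  destruct (continuity_ab_maj (extend0 f) a b (proj2 Hab)
              (fun c _ => continuity_pt_extend0 f Hf c)) as [u [Hmax Hu]].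
  exists u; split; [assumption|]. intros s Hs.
  specialize (Hmax s Hs). unfold extend0 in Hmax. rewrite !Rmax_right in Hmax by lra.
  assumption.
Qed.

Lemma cont_nonneg_bounded f T : cont_nonneg f ->
  exists B, 0 <= B /\ forall s, 0 <= s <= T -> Rabs (f s) <= B.
Proof.
  intros Hf.
  assert (HT : 0 <= 0 <= Rmax 0 T) by (split; [lra|apply Rmax_l]).
  destruct (cont_nonneg_argmax f 0 (Rmax 0 T) Hf HT) as [u [Hu Hmax]].
  destruct (cont_nonneg_argmax (fun s => -1 * f s) 0 (Rmax 0 T)
              (cont_nonneg_scal (-1) f Hf) HT) as [v [Hv Hmin]].
  exists (Rabs (f u) + Rabs (f v)); split.
  - pose proof (Rabs_pos (f u)); pose proof (Rabs_pos (f v)); lra.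
  - intros s Hs.
    assert (Hs' : 0 <= s <= Rmax 0 T) by (pose proof (Rmax_r 0 T); lra).
    specialize (Hmax s Hs'); specialize (Hmin s Hs').
    pose proof (proj1 (Rabs_le_iff (f u) _) (Rle_refl _)).
    pose proof (proj1 (Rabs_le_iff (f v) _) (Rle_refl _)).
    apply Rabs_le_iff; lra.
Qed.

Lemma cont_nonneg_unif f T eps : cont_nonneg f -> 0 < eps ->
  exists d, 0 < d /\ forall u v, 0 <= u <= T -> 0 <= v <= T ->
    Rabs (u - v) < d -> Rabs (f u - f v) < eps.
Proof.
  intros Hf Heps.
  destruct (Heine (extend0 f) (fun z => 0 <= z <= T) (compact_P3 0 T)
              (fun z _ => continuity_pt_extend0 f Hf z) (mkposreal eps Heps)) as [d Hd].
  exists d; split; [apply cond_pos|]. intros u v Hu Hv Huv.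
  specialize (Hd u v Hu Hv Huv). unfold extend0 in Hd. rewrite !Rmax_right in Hd by lra.
  exact Hd.
Qed.

(* The one-dimensional Skorokhod regulator: [reflection x t] is
   [sup_{0 <= s <= t} max 0 (- x s)]; for a continuous [x] the supremum exists. *)
Definition reflection (x : R -> R) (t : R) : R :=
  epsilon (inhabits 0)
    (is_lub (fun y => y = 0 \/ exists s, 0 <= s <= t /\ y = - x s)).

Section Reflection.
Variable x : R -> R.
Hypothesis cont_x : cont_nonneg x.

Lemma reflection_lub t :
  is_lub (fun y => y = 0 \/ exists s, 0 <= s <= t /\ y = - x s) (reflection x t).
Proof.
  unfold reflection; apply epsilon_spec.
  destruct (cont_nonneg_bounded x t cont_x) as [B [HB0 HB]].
  destruct (completeness (fun y => y = 0 \/ exists s, 0 <= s <= t /\ y = - x s)) as [m Hm].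
  - exists B. intros y [->|[s [Hs ->]]]; [assumption|].
    specialize (HB s Hs). apply Rabs_le_iff in HB. lra.
  - exists 0; left; reflexivity.
  - exists m; exact Hm.
Qed.

Lemma reflection_ge0 t : 0 <= reflection x t.
Proof. apply (proj1 (reflection_lub t)). left; reflexivity. Qed.

Lemma reflection_ge t s : 0 <= s <= t -> - x s <= reflection x t.
Proof. intros Hs. apply (proj1 (reflection_lub t)). right; exists s; auto. Qed.

Lemma reflection_le t K :
  0 <= K -> (forall s, 0 <= s <= t -> - x s <= K) -> reflection x t <= K.
Proof. intros HK H. apply (proj2 (reflection_lub t)). intros y [->|[s [Hs ->]]]; auto. Qed.

Lemma reflection_le_split s t K : 0 <= s -> reflection x s <= K ->
  (forall u, s <= u <= t -> - x u <= K) -> reflection x t <= K.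
Proof.
  intros Hs HsK Hlate. apply reflection_le; [pose proof (reflection_ge0 s); lra|].
  intros u Hu. destruct (Rle_or_lt u s) as [Hus|Hus].
  - pose proof (reflection_ge s u (conj (proj1 Hu) Hus)). lra.
  - apply Hlate; lra.
Qed.

Lemma reflection_mono s t : s <= t -> reflection x s <= reflection x t.
Proof.
  intros Hst. apply reflection_le; [apply reflection_ge0|].
  intros u Hu. apply reflection_ge; lra.
Qed.

Lemma reflection_at0 : 0 <= x 0 -> reflection x 0 = 0.
Proof.
  intros Hx0. apply Rle_antisym; [|apply reflection_ge0].
  apply reflection_le; [lra|]. intros s Hs. replace s with 0 by lra. lra.
Qed.

Lemma reflection_cont : cont_nonneg (reflection x).
Proof.
  intros t Ht eps Heps.
  destruct (cont_x t Ht (eps / 3)) as [d [Hd Hxd]]; [lra|].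
  exists d; split; [assumption|]. intros s Hs Hst. apply Rabs_lt_iff.
  assert (Hclose : forall u, 0 <= u -> Rabs (u - t) < d -> - x u < - x t + eps / 3).
  { intros u Hu Hut. specialize (Hxd u Hu Hut). apply Rabs_lt_iff in Hxd. lra. }
  destruct (Rle_or_lt t s) as [Hts|Hst'].
  - assert (reflection x s <= reflection x t + eps / 3).
    { apply (reflection_le_split t); [assumption|lra|].
      intros u Hu. pose proof (reflection_ge t t (conj Ht (Rle_refl t))).
      assert (Hut : Rabs (u - t) < d)
        by (apply Rabs_lt_iff; apply Rabs_lt_iff in Hst; lra).
      pose proof (Hclose u ltac:(lra) Hut). lra. }
    pose proof (reflection_mono t s Hts). lra.
  - assert (reflection x t <= reflection x s + 2 * eps / 3).
    { apply (reflection_le_split s); [assumption|lra|].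
      intros u Hu. pose proof (reflection_ge s s (conj Hs (Rle_refl s))).
      assert (Hut : Rabs (u - t) < d)
        by (apply Rabs_lt_iff; apply Rabs_lt_iff in Hst; lra).
      pose proof (Hclose u ltac:(lra) Hut). pose proof (Hxd s Hs Hst) as Hxs.
      apply Rabs_lt_iff in Hxs. lra. }
    pose proof (reflection_mono s t (Rlt_le _ _ Hst')). lra.
Qed.

Lemma reflection_increases_only_at_zero :
  increases_only_at_zero (fun t => x t + reflection x t) (reflection x).
Proof.
  intros s t Hs Hst Hlt.
  (* At a minimiser [u] of [x] on [s, t] the regulator already has its value at [t]. *)
  destruct (cont_nonneg_argmax (fun u => -1 * x u) s t (cont_nonneg_scal (-1) x cont_x)
              (conj Hs Hst)) as [u [Hu Hmax]].
  exists u; split; [assumption|].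
  assert (Hsplit : reflection x t <= Rmax (reflection x s) (- x u)).
  { apply (reflection_le_split s); [assumption|apply Rmax_l|].
    intros w Hw. specialize (Hmax w Hw). pose proof (Rmax_r (reflection x s) (- x u)). lra. }
  assert (Hattained : reflection x t <= - x u).
  { unfold Rmax in Hsplit; destruct (Rle_dec (reflection x s) (- x u)); lra. }
  pose proof (reflection_ge u u (conj (ltac:(lra) : 0 <= u) (Rle_refl u))).
  pose proof (reflection_mono u t (proj2 Hu)). lra.
Qed.

End Reflection.

Lemma reflection_lipschitz x y t K : cont_nonneg x -> cont_nonneg y -> 0 <= K ->
  (forall s, 0 <= s <= t -> Rabs (x s - y s) <= K) ->
  Rabs (reflection x t - reflection y t) <= K.
Proof.
  intros Hx Hy HK Hxy. apply Rabs_le_iff.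
  assert (reflection x t <= reflection y t + K).
  { apply reflection_le; [assumption|pose proof (reflection_ge0 y Hy t); lra|].
    intros s Hs. specialize (Hxy s Hs). apply Rabs_le_iff in Hxy.
    pose proof (reflection_ge y Hy t s Hs). lra. }
  assert (reflection y t <= reflection x t + K).
  { apply reflection_le; [assumption|pose proof (reflection_ge0 x Hx t); lra|].
    intros s Hs. specialize (Hxy s Hs). apply Rabs_le_iff in Hxy.
    pose proof (reflection_ge x Hx t s Hs). lra. }
  lra.
Qed.

Lemma reflection_solves x m : cont_nonneg x -> 0 <= x 0 ->
  (forall t, 0 <= t -> m t = reflection x t) ->
  cont_nonneg m /\ m 0 = 0 /\ nondecr_nonneg m /\
  (forall t, 0 <= t -> 0 <= x t + m t) /\
  increases_only_at_zero (fun t => x t + m t) m.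
Proof.
  intros Hx Hx0 Em.
  split; [|split; [|split; [|split]]].
  - apply (cont_nonneg_ext (reflection x)); [intros; symmetry; auto|].
    apply reflection_cont; assumption.
  - rewrite Em by lra. apply reflection_at0; assumption.
  - intros s t Hs Hst. rewrite !Em by lra. apply reflection_mono; assumption.
  - intros t Ht. rewrite Em by assumption.
    pose proof (reflection_ge x Hx t t (conj Ht (Rle_refl t))). lra.
  - intros s t Hs Hst Hlt. rewrite !Em in Hlt by lra.
    destruct (reflection_increases_only_at_zero x Hx s t Hs Hst Hlt) as [u [Hu Hzero]].
    exists u; split; [assumption|]. rewrite Em by lra. assumption.
Qed.

Lemma lub_of_zeros_is_zero g (Z : R -> Prop) a s : cont_nonneg g -> 0 <= a ->
  (forall u, Z u -> a <= u /\ g u = 0) -> (exists u, Z u) -> is_lub Z s -> g s = 0.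
Proof.
  intros Hg Ha HZ [u0 Hu0] [Hub Hlub].
  assert (Hs : a <= s) by (pose proof (Hub u0 Hu0); pose proof (HZ u0 Hu0); lra).
  destruct (Req_dec (g s) 0) as [|Hne]; [assumption|exfalso].
  destruct (Hg s ltac:(lra) (Rabs (g s)) (Rabs_pos_lt _ Hne)) as [d [Hd Hgd]].
  assert (Hbound : is_upper_bound Z (s - d / 2)).
  { intros u Hu. destruct (Rle_or_lt u (s - d / 2)) as [|Hlt]; [assumption|exfalso].
    destruct (HZ u Hu) as [Hau Hgu]. pose proof (Hub u Hu).
    assert (Hus : Rabs (u - s) < d) by (apply Rabs_lt_iff; lra).
    specialize (Hgd u ltac:(lra) Hus).
    rewrite Hgu, Rminus_0_l, Rabs_Ropp in Hgd. lra. }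
  pose proof (Hlub _ Hbound). lra.
Qed.

Lemma last_zero_of_increase g m r t : cont_nonneg g -> cont_nonneg m ->
  nondecr_nonneg m -> increases_only_at_zero g m ->
  0 <= r <= t -> m r < m t -> exists s, r <= s <= t /\ g s = 0 /\ m s = m t.
Proof.
  intros Hg Hm Hmono Hzero Hrt Hlt.
  set (Z := fun u => r <= u <= t /\ g u = 0).
  assert (HZ : exists u, Z u).
  { destruct (Hzero r t (proj1 Hrt) (proj2 Hrt) Hlt) as [u Hu]. exists u; exact Hu. }
  destruct (completeness Z) as [s Hs].
  - exists t. intros u [Hu _]. lra.
  - exact HZ.
  - assert (Hgs : g s = 0)
      by (apply (lub_of_zeros_is_zero g Z r s Hg (proj1 Hrt)); auto;
          intros u [Hu Hgu]; split; [lra|assumption]).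
    destruct HZ as [u0 Hu0].
    assert (Hrs : r <= s <= t).
    { split; [pose proof (proj1 Hs u0 Hu0); destruct Hu0; lra|].
      apply (proj2 Hs). intros u [Hu _]; lra. }
    exists s; split; [assumption|split; [assumption|]].
    destruct (Rle_lt_or_eq_dec (m s) (m t) (Hmono s t ltac:(lra) (proj2 Hrs)))
      as [Hmst|]; [exfalso|assumption].
    destruct (Hm s ltac:(lra) (m t - m s)) as [d [Hd Hmd]]; [lra|].
    destruct (Rle_lt_or_eq_dec s t (proj2 Hrs)) as [Hst| ->]; [|lra].
    set (u := Rmin t (s + d / 2)).
    assert (Hsu : s < u) by (apply Rmin_glb_lt; lra).
    assert (Hut : u <= t) by apply Rmin_l.
    assert (Hud : u <= s + d / 2) by apply Rmin_r.
    assert (Hus : Rabs (u - s) < d) by (apply Rabs_lt_iff; lra).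
    specialize (Hmd u ltac:(lra) Hus). apply Rabs_lt_iff in Hmd.
    destruct (Hzero u t ltac:(lra) Hut ltac:(lra)) as [v [Hv Hgv]].
    assert (v <= s) by (apply (proj1 Hs); split; [lra|assumption]).
    lra.
Qed.

Lemma increase_le_drop g m h r s K : cont_nonneg g -> cont_nonneg m ->
  nondecr_nonneg m -> increases_only_at_zero g m ->
  (forall t, 0 <= t -> 0 <= g t) -> (forall t, 0 <= t -> g t = h t + m t) ->
  0 <= r <= s -> (forall u, r <= u <= s -> h r - h u <= K) -> m s - m r <= K.
Proof.
  intros Hg Hm Hmono Hzero Hpos Eg Hrs Hdrop.
  pose proof (Hdrop r (conj (Rle_refl r) (proj2 Hrs))) as HK.
  destruct (Rlt_or_le (m r) (m s)) as [Hlt|]; [|lra].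
  destruct (last_zero_of_increase g m r s Hg Hm Hmono Hzero Hrs Hlt)
    as [u [Hu [Hgu Hmu]]].
  pose proof (Eg u ltac:(lra)). pose proof (Eg r ltac:(lra)).
  pose proof (Hpos r ltac:(lra)). specialize (Hdrop u Hu). lra.
Qed.

Definition loc_unif_cauchy (u : nat -> R -> R) : Prop :=
  forall T eps, 0 < eps -> exists N, forall n p, (N <= n)%nat -> (N <= p)%nat ->
    forall s, 0 <= s <= T -> Rabs (u n s - u p s) <= eps.

Definition loc_unif_cvg (u : nat -> R -> R) (U : R -> R) : Prop :=
  forall T eps, 0 < eps -> exists N, forall n, (N <= n)%nat ->
    forall s, 0 <= s <= T -> Rabs (u n s - U s) <= eps.

Lemma loc_unif_cauchy_cvg u : loc_unif_cauchy u -> exists U, loc_unif_cvg u U.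
Proof.
  intros Hu.
  set (U := fun s => epsilon (inhabits 0) (fun l => Un_cv (fun n => u n s) l)).
  assert (HU : forall s, 0 <= s -> Un_cv (fun n => u n s) (U s)).
  { intros s Hs. unfold U. apply epsilon_spec.
    destruct (R_complete (fun n => u n s)) as [l Hl]; [|exists l; exact Hl].
    intros eps Heps. destruct (Hu s (eps / 2)) as [N HN]; [lra|].
    exists N. intros n p Hn Hp. unfold Rdist.
    specialize (HN n p Hn Hp s (conj Hs (Rle_refl s))). lra. }
  exists U. intros T eps Heps. destruct (Hu T eps Heps) as [N HN].
  exists N. intros n Hn s Hs.
  apply Rnot_lt_le; intro Hgt.
  destruct (HU s (proj1 Hs) (Rabs (u n s - U s) - eps)) as [N' HN']; [lra|].
  specialize (HN' (max N N') (Nat.le_max_r _ _)). unfold Rdist in HN'.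
  specialize (HN n (max N N') Hn (Nat.le_max_l _ _) s Hs).
  pose proof (Rabs_triang (u n s - u (max N N') s) (u (max N N') s - U s)) as Htri.
  replace (u n s - u (max N N') s + (u (max N N') s - U s)) with (u n s - U s) in Htri
    by ring.
  lra.
Qed.

Lemma loc_unif_cvg_cont u U :
  (forall n, cont_nonneg (u n)) -> loc_unif_cvg u U -> cont_nonneg U.
Proof.
  intros Hu HU t Ht eps Heps.
  destruct (HU (t + 1) (eps / 4)) as [N HN]; [lra|].
  destruct (Hu N t Ht (eps / 4)) as [d [Hd HNd]]; [lra|].
  exists (Rmin d 1); split; [apply Rmin_pos; lra|].
  intros s Hs Hst.
  assert (Hsd : Rabs (s - t) < d) by (pose proof (Rmin_l d 1); lra).
  assert (Hs1 : s <= t + 1) by (pose proof (Rmin_r d 1); apply Rabs_lt_iff in Hst; lra).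
  specialize (HNd s Hs Hsd). apply Rabs_lt_iff in HNd.
  pose proof (HN N (le_n N) s (conj Hs Hs1)) as Es.
  pose proof (HN N (le_n N) t (conj Ht (Rlt_le _ _ (Rlt_plus_1 t)))) as Et.
  apply Rabs_le_iff in Es, Et. apply Rabs_lt_iff. lra.
Qed.

Lemma loc_unif_cvg_affine f b beta u U : Un_cv b beta -> loc_unif_cvg u U ->
  cont_nonneg U ->
  loc_unif_cvg (fun n s => f s + b n * u n s) (fun s => f s + beta * U s).
Proof.
  intros Hb Hu HU T eps Heps.
  destruct (cont_nonneg_bounded U T HU) as [B [HB0 HB]].
  set (K := Rabs beta + 1).
  assert (HK : 0 < K) by (unfold K; pose proof (Rabs_pos beta); lra).
  destruct (Hb (Rmin 1 (eps / (2 * (B + 1))))) as [N1 HN1].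
  { apply Rmin_pos; [lra|apply Rdiv_lt_0_compat; lra]. }
  destruct (Hu T (eps / (2 * K))) as [N2 HN2]; [apply Rdiv_lt_0_compat; lra|].
  exists (max N1 N2). intros n Hn s Hs.
  specialize (HN1 n ltac:(lia)). specialize (HN2 n ltac:(lia) s Hs). specialize (HB s Hs).
  unfold Rdist in HN1.
  assert (Hbn : Rabs (b n) <= K).
  { pose proof (Rabs_triang (b n - beta) beta) as Htri.
    replace (b n - beta + beta) with (b n) in Htri by ring.
    pose proof (Rmin_l 1 (eps / (2 * (B + 1)))). unfold K; lra. }
  replace (f s + b n * u n s - (f s + beta * U s))
    with (b n * (u n s - U s) + (b n - beta) * U s) by ring.
  eapply Rle_trans; [apply Rabs_triang|]. rewrite !Rabs_mult.
  assert (E1 : Rabs (b n) * Rabs (u n s - U s) <= eps / 2).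
  { apply Rle_trans with (K * (eps / (2 * K))).
    - apply Rmult_le_compat; try apply Rabs_pos; assumption.
    - apply Req_le; field; lra. }
  assert (E2 : Rabs (b n - beta) * Rabs (U s) <= eps / 2).
  { apply Rle_trans with (eps / (2 * (B + 1)) * (B + 1)).
    - apply Rmult_le_compat; try apply Rabs_pos; [|lra].
      pose proof (Rmin_r 1 (eps / (2 * (B + 1)))); lra.
    - apply Req_le; field; lra. }
  lra.
Qed.

Lemma reflection_loc_unif_limit x X z Z :
  (forall n, cont_nonneg (x n)) -> cont_nonneg X -> loc_unif_cvg x X ->
  loc_unif_cvg z Z -> (forall n t, 0 <= t -> z n t = reflection (x n) t) ->
  forall t, 0 <= t -> Z t = reflection X t.
Proof.
  intros Hx HX Hcvg Hz Ez t Ht. apply Req_of_Rabs_le_eps. intros eps Heps.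
  destruct (Hcvg t (eps / 2)) as [N1 HN1]; [lra|].
  destruct (Hz t (eps / 2)) as [N2 HN2]; [lra|].
  set (n := max N1 N2).
  pose proof (HN2 n ltac:(lia) t (conj Ht (Rle_refl t))) as Hzn.
  rewrite Ez in Hzn by assumption.
  assert (Hxn : Rabs (reflection (x n) t - reflection X t) <= eps / 2).
  { apply reflection_lipschitz; auto; [lra|]. intros s Hs. apply HN1; [lia|assumption]. }
  apply Rabs_le_iff in Hzn, Hxn. apply Rabs_le_iff. lra.
Qed.

Section Contraction.
Variables (F : (R -> R) -> R -> R) (k : R).
Hypothesis k_range : 0 <= k < 1.
Hypothesis F_cont : forall x, cont_nonneg x -> cont_nonneg (F x).
Hypothesis F_contraction : forall x y T K, cont_nonneg x -> cont_nonneg y ->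
  (forall s, 0 <= s <= T -> Rabs (x s - y s) <= K) ->
  forall s, 0 <= s <= T -> Rabs (F x s - F y s) <= k * K.

Local Notation iterate n := (Nat.iter n F (fun _ => 0)).

Lemma iterate_cont n : cont_nonneg (iterate n).
Proof. induction n as [|n IH]; [apply cont_nonneg_const|apply F_cont, IH]. Qed.

Lemma iterate_gap T : exists C, 0 <= C /\ forall n p s, 0 <= s <= T ->
  Rabs (iterate (n + p)%nat s - iterate n s) * (1 - k) <= C * k ^ n.
Proof.
  destruct (cont_nonneg_bounded (iterate 1%nat) T (iterate_cont 1)) as [C [HC HCb]].
  assert (Hstep : forall n s, 0 <= s <= T ->
            Rabs (iterate (S n) s - iterate n s) <= C * k ^ n).
  { induction n as [|n IH]; intros s Hs.
    - rewrite Rminus_0_r, pow_O, Rmult_1_r. auto.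
    - change (iterate (S (S n))) with (F (iterate (S n))).
      change (iterate (S n)) with (F (iterate n)) at 2.
      rewrite <- tech_pow_Rmult, (Rmult_comm k), <- Rmult_assoc, (Rmult_comm _ k).
      apply (F_contraction _ _ T); auto using iterate_cont. }
  exists C; split; [assumption|].
  intros n p; revert n. induction p as [|p IH]; intros n s Hs.
  - rewrite Nat.add_0_r, Rminus_diag, Rabs_R0, Rmult_0_l.
    apply Rmult_le_pos; [assumption|apply pow_le; lra].
  - rewrite Nat.add_succ_r, <- Nat.add_succ_l.
    specialize (IH (S n) s Hs). specialize (Hstep n s Hs).
    pose proof (Rabs_triang (iterate (S n + p)%nat s - iterate (S n) s)
                            (iterate (S n) s - iterate n s)) as Htri.
    replace (iterate (S n + p)%nat s - iterate (S n) s + (iterate (S n) s - iterate n s))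
      with (iterate (S n + p)%nat s - iterate n s) in Htri by ring.
    simpl pow in IH. nra.
Qed.

Lemma iterate_loc_unif_cauchy : loc_unif_cauchy (fun n => iterate n).
Proof.
  intros T eps Heps. destruct (iterate_gap T) as [C [HC Hgap]].
  destruct (pow_lt_1_zero k ltac:(rewrite Rabs_right; lra) (eps * (1 - k) / (2 * (C + 1))))
    as [N HN].
  { apply Rdiv_lt_0_compat; nra. }
  assert (Hclose : forall n s, (N <= n)%nat -> 0 <= s <= T ->
            Rabs (iterate n s - iterate N s) <= eps / 2).
  { intros n s Hn Hs. replace n with (N + (n - N))%nat by lia.
    specialize (Hgap N (n - N)%nat s Hs). specialize (HN N (le_n N)).
    rewrite Rabs_right in HN by (apply Rle_ge, pow_le; lra).
    assert (Hy : (C + 1) * (eps * (1 - k) / (2 * (C + 1))) = eps / 2 * (1 - k))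
      by (field; lra).
    apply Rmult_le_reg_r with (1 - k); [lra|]. pose proof (pow_le k N (proj1 k_range)). nra. }
  exists N. intros n p Hn Hp s Hs.
  pose proof (Hclose n s Hn Hs) as Hns. pose proof (Hclose p s Hp Hs) as Hps.
  apply Rabs_le_iff in Hns, Hps. apply Rabs_le_iff. lra.
Qed.

Lemma contraction_fixpoint : exists x, cont_nonneg x /\ forall t, 0 <= t -> x t = F x t.
Proof.
  destruct (loc_unif_cauchy_cvg _ iterate_loc_unif_cauchy) as [X HX].
  assert (HXcont : cont_nonneg X) by (apply (loc_unif_cvg_cont _ _ iterate_cont HX)).
  exists X; split; [assumption|]. intros t Ht. apply Req_of_Rabs_le_eps. intros eps Heps.
  destruct (HX t (eps / 2)) as [N HN]; [lra|].
  assert (HF : Rabs (F (iterate N) t - F X t) <= k * (eps / 2))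
    by (apply (F_contraction (iterate N) X t (eps / 2) (iterate_cont N) HXcont);
        [intros s Hs; apply HN; auto|split; lra]).
  pose proof (HN (S N) (le_S _ _ (le_n N)) t (conj Ht (Rle_refl t))) as HSN.
  change (iterate (S N)) with (F (iterate N)) in HSN.
  apply Rabs_le_iff in HF, HSN. apply Rabs_le_iff. nra.
Qed.

End Contraction.

Definition pingpong (D E : R -> R) (T err : R) : Prop :=
  (forall t, 0 <= t <= T -> 0 < D t -> exists s, 0 <= s <= t /\ D t - err <= E s) /\
  (forall t, 0 <= t <= T -> 0 < E t -> exists s, 0 <= s <= t /\ E t <= - D s) /\
  (forall t, 0 <= t <= T -> D t < 0 -> exists s, 0 <= s <= t /\ - D t - err <= - E s) /\
  (forall t, 0 <= t <= T -> E t < 0 -> exists s, 0 <= s <= t /\ - E t <= D s).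

Section PingPong.
Variables (D E : R -> R) (T err : R).
Hypothesis err_ge0 : 0 <= err.
Hypothesis DE_pingpong : pingpong D E T err.

Lemma pingpong_sign_flip t : 0 <= t <= T -> err < Rabs (D t) ->
  exists s, 0 <= s <= t /\ Rabs (D t) - err <= Rabs (D s) /\
    Rabs (D t) + Rabs (D s) <= Rabs (D t - D s).
Proof.
  intros Ht Hbig.
  destruct DE_pingpong as (D_pos & E_pos & D_neg & E_neg).
  destruct (Rlt_or_le 0 (D t)) as [Hpos|Hneg].
  - rewrite Rabs_right in Hbig by lra.
    destruct (D_pos t Ht Hpos) as [s1 [Hs1 HE]].
    destruct (E_pos s1 ltac:(lra) ltac:(lra)) as [s [Hs HD]].
    exists s; split; [lra|].
    rewrite Rabs_right, (Rabs_left (D s)), (Rabs_right (D t - D s)) by lra. lra.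
  - rewrite Rabs_left1 in Hbig by lra.
    destruct (D_neg t Ht ltac:(lra)) as [s1 [Hs1 HE]].
    destruct (E_neg s1 ltac:(lra) ltac:(lra)) as [s [Hs HD]].
    exists s; split; [lra|].
    rewrite Rabs_left1, (Rabs_right (D s)), (Rabs_left1 (D t - D s)) by lra. lra.
Qed.

Variables (x d : R).
Hypothesis x_pos : 0 < x.
Hypothesis D_modulus : forall u v, 0 <= u <= T -> 0 <= v <= T ->
  Rabs (u - v) < d -> Rabs (D u - D v) < x.

(* Each sign flip of a large [D] costs at most [err] in size and, by the
   modulus of continuity, at least [d] in time. *)
Lemma pingpong_elapsed n t : 0 <= t <= T ->
  x / 2 + INR (S n) * err <= Rabs (D t) -> INR n * d <= t.
Proof.
  revert t. induction n as [|n IH]; intros t Ht Hbig; [simpl; lra|].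
  assert (Herr : INR (S (S n)) * err = INR (S n) * err + err)
    by (rewrite (S_INR (S n)); ring).
  assert (Hd : INR (S n) * d = INR n * d + d) by (rewrite S_INR; ring).
  assert (0 <= INR (S n) * err) by (apply Rmult_le_pos; [apply pos_INR|lra]).
  destruct (pingpong_sign_flip t Ht ltac:(lra)) as [s [Hs [Hsize Hjump]]].
  assert (INR n * d <= s) by (apply IH; lra).
  assert (d <= t - s).
  { apply Rnot_lt_le. intro Hclose.
    assert (Hts : Rabs (t - s) < d) by (apply Rabs_lt_iff; lra).
    pose proof (D_modulus t s Ht ltac:(lra) Hts). lra. }
  lra.
Qed.

Lemma pingpong_small n : T < INR n * d -> INR (S n) * err <= x / 2 ->
  forall t, 0 <= t <= T -> Rabs (D t) < x /\ Rabs (E t) < x.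
Proof.
  intros HT Herr.
  destruct DE_pingpong as (_ & E_pos & _ & E_neg).
  assert (HD : forall t, 0 <= t <= T -> Rabs (D t) < x).
  { intros t Ht. apply Rnot_le_lt. intro Hbig.
    pose proof (pingpong_elapsed n t Ht ltac:(lra)). lra. }
  intros t Ht. split; [apply HD; assumption|].
  apply Rabs_lt_iff. split; apply Rnot_le_lt; intro Hbig.
  - destruct (E_neg t Ht ltac:(lra)) as [s [Hs HDs]].
    pose proof (HD s ltac:(lra)) as HDx. apply Rabs_lt_iff in HDx. lra.
  - destruct (E_pos t Ht ltac:(lra)) as [s [Hs HDs]].
    pose proof (HD s ltac:(lra)) as HDx. apply Rabs_lt_iff in HDx. lra.
Qed.

End PingPong.

Section CriticalSkorokhod.
Variables (a1 a2 : R) (f1 f2 : R -> R).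
Hypothesis a1_neg : a1 < 0.
Hypothesis a2_pos : 0 < a2.
Hypothesis a1a2 : a1 * a2 = -1.
Hypothesis driving_f : driving f1 f2.

Let cont_f1 : cont_nonneg f1 := proj1 driving_f.
Let cont_f2 : cont_nonneg f2 := proj1 (proj2 driving_f).

Local Notation solves r := (SP_solution 1 r a2 1 f1 f2).

Lemma solution_m_nonneg r g1 g2 m1 m2 : solves r g1 g2 m1 m2 ->
  forall t, 0 <= t -> 0 <= m1 t /\ 0 <= m2 t.
Proof.
  intros (_ & _ & _ & _ & _ & Hm10 & Hm20 & Hmono1 & Hmono2 & _) t Ht.
  pose proof (Hmono1 0 t (Rle_refl 0) Ht). pose proof (Hmono2 0 t (Rle_refl 0) Ht). lra.
Qed.

Lemma solution_m2_bounded T : exists M, 0 <= M /\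
  forall r g1 g2 m1 m2, solves r g1 g2 m1 m2 -> forall s, 0 <= s <= T -> m2 s <= M.
Proof.
  destruct (cont_nonneg_bounded f2 T cont_f2) as [B [HB0 HB]].
  exists (2 * B); split; [lra|].
  intros r g1 g2 m1 m2 Hsol s Hs.
  destruct Hsol as (_ & Hg2 & Hg & _ & Hm2 & _ & Hm20 & Hmono1 & Hmono2 & Heq & _ & Hzero2).
  assert (m2 s - m2 0 <= 2 * B); [|lra].
  apply (increase_le_drop g2 m2 (fun t => f2 t + a2 * m1 t)); auto; [| |lra|].
  - intros t Ht. apply (Hg t Ht).
  - intros t Ht. rewrite (proj2 (Heq t Ht)). ring.
  - intros u Hu. pose proof (Hmono1 0 u (Rle_refl 0) (proj1 Hu)).
    pose proof (HB 0 ltac:(lra)) as B0. pose proof (HB u ltac:(lra)) as Bu.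
    apply Rabs_le_iff in B0, Bu. nra.
Qed.

Lemma solution_increment_small T x : 0 < x -> exists d, 0 < d /\
  forall r g1 g2 m1 m2, a1 <= r <= 0 -> solves r g1 g2 m1 m2 ->
  forall u v, 0 <= u <= v -> v <= T -> v - u < d ->
  m1 v - m1 u <= x /\ m2 v - m2 u <= x.
Proof.
  intros Hx.
  set (eta := x / (1 - a1)).
  assert (Heta : 0 < eta) by (apply Rdiv_lt_0_compat; lra).
  assert (Hx_eta : x = eta + - a1 * eta) by (unfold eta; field; lra).
  destruct (cont_nonneg_unif f1 T eta cont_f1 Heta) as [d1 [Hd1 Hf1d]].
  destruct (cont_nonneg_unif f2 T eta cont_f2 Heta) as [d2 [Hd2 Hf2d]].
  exists (Rmin d1 d2); split; [apply Rmin_pos; assumption|].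
  intros r g1 g2 m1 m2 Hr Hsol u v Huv HvT Hvu.
  pose proof (Rmin_l d1 d2). pose proof (Rmin_r d1 d2).
  destruct Hsol as (Hg1 & Hg2 & Hg & Hm1 & Hm2 & _ & _ & Hmono1 & Hmono2 & Heq & Hzero1 & Hzero2).
  assert (Hf : forall w, u <= w <= v -> f1 u - f1 w <= eta /\ f2 u - f2 w <= eta).
  { intros w Hw. assert (Huw : Rabs (u - w) < Rmin d1 d2) by (apply Rabs_lt_iff; lra).
    specialize (Hf1d u w ltac:(lra) ltac:(lra) ltac:(lra)).
    specialize (Hf2d u w ltac:(lra) ltac:(lra) ltac:(lra)).
    apply Rabs_lt_iff in Hf1d, Hf2d. lra. }
  assert (Hm2inc : forall w, u <= w <= v -> m2 w - m2 u <= eta).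
  { intros w Hw. apply (increase_le_drop g2 m2 (fun t => f2 t + a2 * m1 t)); auto; [| |lra|].
    - intros t Ht. apply (Hg t Ht).
    - intros t Ht. rewrite (proj2 (Heq t Ht)). ring.
    - intros z Hz. pose proof (Hmono1 u z (proj1 Huv) (proj1 Hz)).
      pose proof (proj2 (Hf z ltac:(lra))). nra. }
  split; [|pose proof (Hm2inc v ltac:(lra)); nra].
  rewrite Hx_eta. apply (increase_le_drop g1 m1 (fun t => f1 t + r * m2 t)); auto.
  - intros t Ht. apply (Hg t Ht).
  - intros t Ht. rewrite (proj1 (Heq t Ht)). ring.
  - intros z Hz. pose proof (Hmono2 u z (proj1 Huv) (proj1 Hz)).
    pose proof (Hm2inc z Hz). pose proof (proj1 (Hf z Hz)).
    assert (- r * (m2 z - m2 u) <= - a1 * eta) by (apply Rmult_le_compat; lra).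
    lra.
Qed.

Lemma solutions_equicontinuous T x : 0 < x -> exists d, 0 < d /\
  forall r g1 g2 m1 m2, a1 <= r <= 0 -> solves r g1 g2 m1 m2 ->
  forall u v, 0 <= u <= T -> 0 <= v <= T -> Rabs (u - v) < d ->
  Rabs (m1 u - m1 v) <= x /\ Rabs (m2 u - m2 v) <= x.
Proof.
  intros Hx. destruct (solution_increment_small T x Hx) as [d [Hd Hinc]].
  exists d; split; [assumption|].
  intros r g1 g2 m1 m2 Hr Hsol u v Hu Hv Huv. apply Rabs_lt_iff in Huv.
  pose proof Hsol as (_ & _ & _ & _ & _ & _ & _ & Hmono1 & Hmono2 & _).
  destruct (Rle_or_lt u v) as [Hle|Hlt].
  - destruct (Hinc r g1 g2 m1 m2 Hr Hsol u v ltac:(lra) ltac:(lra) ltac:(lra)).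
    pose proof (Hmono1 u v ltac:(lra) Hle). pose proof (Hmono2 u v ltac:(lra) Hle).
    split; apply Rabs_le_iff; lra.
  - destruct (Hinc r g1 g2 m1 m2 Hr Hsol v u ltac:(lra) ltac:(lra) ltac:(lra)).
    pose proof (Hmono1 v u ltac:(lra) (Rlt_le _ _ Hlt)).
    pose proof (Hmono2 v u ltac:(lra) (Rlt_le _ _ Hlt)).
    split; apply Rabs_le_iff; lra.
Qed.

Lemma m1_gap_backtrack r r' g1 g2 m1 m2 g1' g2' m1' m2' M t :
  a1 <= r -> a1 <= r' -> solves r g1 g2 m1 m2 -> solves r' g1' g2' m1' m2' ->
  (forall s, 0 <= s <= t -> m2' s <= M) -> 0 <= t -> m1' t < m1 t ->
  exists s, 0 <= s <= t /\ m1 t - m1' t - (r' - a1) * M <= - a1 * (m2 s - m2' s).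
Proof.
  intros Hr Hr' Hsol Hsol' HM Ht Hlt.
  pose proof (solution_m_nonneg _ _ _ _ _ Hsol) as Hpos.
  pose proof (solution_m_nonneg _ _ _ _ _ Hsol') as Hpos'.
  destruct Hsol as (Hg1 & _ & _ & Hm1 & _ & Hm10 & _ & Hmono1 & _ & Heq & Hzero1 & _).
  destruct Hsol' as (_ & _ & Hg' & _ & _ & _ & _ & Hmono1' & _ & Heq' & _).
  assert (Hinc : m1 0 < m1 t) by (pose proof (Hpos' t Ht); lra).
  destruct (last_zero_of_increase g1 m1 0 t Hg1 Hm1 Hmono1 Hzero1
              (conj (Rle_refl 0) Ht) Hinc) as [s [Hs [Hgs Hms]]].
  exists s; split; [lra|].
  pose proof (proj1 (Heq s ltac:(lra))). pose proof (proj1 (Heq' s ltac:(lra))).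
  pose proof (proj1 (Hg' s ltac:(lra))). pose proof (Hmono1' s t ltac:(lra) (proj2 Hs)).
  pose proof (proj2 (Hpos s ltac:(lra))).
  assert (0 <= (r - a1) * m2 s) by (apply Rmult_le_pos; lra).
  assert ((r' - a1) * m2' s <= (r' - a1) * M)
    by (apply Rmult_le_compat_l; [lra|apply HM; lra]).
  lra.
Qed.

Lemma m2_gap_backtrack r r' g1 g2 m1 m2 g1' g2' m1' m2' t :
  solves r g1 g2 m1 m2 -> solves r' g1' g2' m1' m2' -> 0 <= t -> m2' t < m2 t ->
  exists s, 0 <= s <= t /\ - a1 * (m2 t - m2' t) <= m1' s - m1 s.
Proof.
  intros Hsol Hsol' Ht Hlt.
  pose proof (solution_m_nonneg _ _ _ _ _ Hsol') as Hpos'.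
  destruct Hsol as (_ & Hg2 & _ & _ & Hm2 & _ & Hm20 & _ & Hmono2 & Heq & _ & Hzero2).
  destruct Hsol' as (_ & _ & Hg' & _ & _ & _ & _ & _ & Hmono2' & Heq' & _).
  assert (Hinc : m2 0 < m2 t) by (pose proof (Hpos' t Ht); lra).
  destruct (last_zero_of_increase g2 m2 0 t Hg2 Hm2 Hmono2 Hzero2
              (conj (Rle_refl 0) Ht) Hinc) as [s [Hs [Hgs Hms]]].
  exists s; split; [lra|].
  pose proof (proj2 (Heq s ltac:(lra))). pose proof (proj2 (Heq' s ltac:(lra))).
  pose proof (proj2 (Hg' s ltac:(lra))). pose proof (Hmono2' s t ltac:(lra) (proj2 Hs)).
  assert (Hmul : - a1 * (m2 t - m2' t) <= - a1 * (a2 * (m1' s - m1 s)))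
    by (apply Rmult_le_compat_l; lra).
  replace (- a1 * (a2 * (m1' s - m1 s))) with (m1' s - m1 s) in Hmul
    by (transitivity (- (a1 * a2) * (m1' s - m1 s)); [rewrite a1a2|]; ring).
  assumption.
Qed.

Lemma solutions_pingpong r r' g1 g2 m1 m2 g1' g2' m1' m2' T M :
  a1 <= r -> a1 <= r' -> solves r g1 g2 m1 m2 -> solves r' g1' g2' m1' m2' -> 0 <= M ->
  (forall s, 0 <= s <= T -> m2 s <= M /\ m2' s <= M) ->
  pingpong (fun s => m1 s - m1' s) (fun s => - a1 * (m2 s - m2' s)) T
           ((r' - a1) * M + (r - a1) * M).
Proof.
  intros Hr Hr' Hsol Hsol' HM0 HM.
  assert (0 <= (r - a1) * M) by (apply Rmult_le_pos; lra).
  assert (0 <= (r' - a1) * M) by (apply Rmult_le_pos; lra).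
  split; [|split; [|split]]; intros t Ht Hsign; cbv beta in Hsign |- *.
  - destruct (m1_gap_backtrack r r' g1 g2 m1 m2 g1' g2' m1' m2' M t Hr Hr' Hsol Hsol'
                (fun s Hs => proj2 (HM s ltac:(lra))) ltac:(lra) ltac:(lra)) as [s [Hs Hgap]].
    exists s; split; [assumption|lra].
  - destruct (m2_gap_backtrack r r' g1 g2 m1 m2 g1' g2' m1' m2' t Hsol Hsol' ltac:(lra)
                ltac:(nra)) as [s [Hs Hgap]].
    exists s; split; [assumption|lra].
  - destruct (m1_gap_backtrack r' r g1' g2' m1' m2' g1 g2 m1 m2 M t Hr' Hr Hsol' Hsol
                (fun s Hs => proj1 (HM s ltac:(lra))) ltac:(lra) ltac:(lra)) as [s [Hs Hgap]].
    exists s; split; [assumption|lra].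
  - destruct (m2_gap_backtrack r' r g1' g2' m1' m2' g1 g2 m1 m2 t Hsol' Hsol ltac:(lra)
                ltac:(nra)) as [s [Hs Hgap]].
    exists s; split; [assumption|lra].
Qed.

Lemma solutions_stable T x : 0 < x -> exists e, 0 < e /\
  forall r r' g1 g2 m1 m2 g1' g2' m1' m2',
  a1 <= r <= 0 -> a1 <= r' <= 0 -> r - a1 <= e -> r' - a1 <= e ->
  solves r g1 g2 m1 m2 -> solves r' g1' g2' m1' m2' ->
  forall t, 0 <= t <= T -> Rabs (m1 t - m1' t) < x /\ Rabs (m2 t - m2' t) < x.
Proof.
  intros Hx.
  set (y := Rmin x (- a1 * x)).
  assert (Hy : 0 < y) by (apply Rmin_pos; nra).
  destruct (solutions_equicontinuous T (y / 3)) as [d [Hd Hequi]]; [lra|].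
  destruct (solution_m2_bounded T) as [M [HM0 HM]].
  destruct (INR_archimed d T Hd) as [n Hn].
  assert (HSn : 0 < INR (S n)) by (apply lt_0_INR; lia).
  set (e := y / (4 * INR (S n) * (M + 1))).
  assert (He : 0 < e) by (apply Rdiv_lt_0_compat; [lra|]; apply Rmult_lt_0_compat; lra).
  exists e; split; [assumption|].
  intros r r' g1 g2 m1 m2 g1' g2' m1' m2' Hr Hr' Hre Hre' Hsol Hsol' t Ht.
  set (err := (r' - a1) * M + (r - a1) * M).
  assert (Herr0 : 0 <= err) by (unfold err; nra).
  assert (Herr : INR (S n) * err <= y / 2).
  { assert (Herr_e : err <= 2 * e * (M + 1)) by (unfold err; nra).
    replace (y / 2) with (INR (S n) * (2 * e * (M + 1))) by (unfold e; field; lra).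
    apply Rmult_le_compat_l; lra. }
  assert (Hpp := solutions_pingpong r r' g1 g2 m1 m2 g1' g2' m1' m2' T M
                   (proj1 Hr) (proj1 Hr') Hsol Hsol' HM0
                   (fun s Hs => conj (HM _ _ _ _ _ Hsol s Hs) (HM _ _ _ _ _ Hsol' s Hs))).
  assert (Hmod : forall u v, 0 <= u <= T -> 0 <= v <= T -> Rabs (u - v) < d ->
            Rabs (m1 u - m1' u - (m1 v - m1' v)) < y).
  { intros u v Hu Hv Huv.
    destruct (Hequi r g1 g2 m1 m2 Hr Hsol u v Hu Hv Huv) as [H1 _].
    destruct (Hequi r' g1' g2' m1' m2' Hr' Hsol' u v Hu Hv Huv) as [H1' _].
    apply Rabs_le_iff in H1, H1'. apply Rabs_lt_iff. lra. }
  destruct (pingpong_small _ _ T err Herr0 Hpp y d Hy Hmod n ltac:(lra) Herr t Ht) as [HD HE].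
  cbv beta in HD, HE.
  assert (y <= x) by apply Rmin_l. assert (y <= - a1 * x) by apply Rmin_r.
  split; [lra|].
  rewrite Rabs_mult, (Rabs_right (- a1)) in HE by lra.
  apply (Rmult_lt_reg_l (- a1)); lra.
Qed.

Lemma solution_unique g1 g2 m1 m2 g1' g2' m1' m2' :
  solves a1 g1 g2 m1 m2 -> solves a1 g1' g2' m1' m2' ->
  forall t, 0 <= t -> m1 t = m1' t /\ m2 t = m2' t.
Proof.
  intros Hsol Hsol' t Ht.
  assert (Hclose : forall eps, 0 < eps ->
            Rabs (m1 t - m1' t) < eps /\ Rabs (m2 t - m2' t) < eps).
  { intros eps Heps. destruct (solutions_stable t eps Heps) as [e [He Hstab]].
    apply (Hstab a1 a1 g1 g2 m1 m2 g1' g2' m1' m2'); try lra; assumption. }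
  split; apply Req_of_Rabs_le_eps; intros eps Heps; apply Rlt_le, (Hclose eps Heps).
Qed.

Definition coupled_fixpoint r m1 m2 : Prop :=
  cont_nonneg m1 /\ cont_nonneg m2 /\
  forall t, 0 <= t -> m1 t = reflection (fun s => f1 s + r * m2 s) t /\
                     m2 t = reflection (fun s => f2 s + a2 * m1 s) t.

Lemma coupled_fixpoint_solves r m1 m2 : coupled_fixpoint r m1 m2 ->
  solves r (fun t => f1 t + r * m2 t + m1 t) (fun t => f2 t + a2 * m1 t + m2 t) m1 m2.
Proof.
  intros (Hm1 & Hm2 & Efix).
  pose proof driving_f as (_ & _ & Hf10 & Hf20).
  assert (Hx1 : cont_nonneg (fun s => f1 s + r * m2 s)) by (apply cont_nonneg_affine; auto).
  assert (Hx2 : cont_nonneg (fun s => f2 s + a2 * m1 s)) by (apply cont_nonneg_affine; auto).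
  assert (Hm10 : 0 <= m1 0)
    by (rewrite (proj1 (Efix 0 (Rle_refl 0))); apply reflection_ge0; assumption).
  destruct (reflection_solves _ m2 Hx2 ltac:(nra) (fun t Ht => proj2 (Efix t Ht)))
    as (_ & Z2 & Mono2 & Pos2 & Inc2).
  destruct (reflection_solves _ m1 Hx1 ltac:(cbv beta; rewrite Z2; lra)
              (fun t Ht => proj1 (Efix t Ht))) as (_ & Z1 & Mono1 & Pos1 & Inc1).
  split; [apply cont_nonneg_plus; assumption|].
  split; [apply cont_nonneg_plus; assumption|].
  split; [intros t Ht; split; auto|].
  do 6 (split; [assumption|]).
  split; [intros t Ht; split; ring|].
  split; assumption.
Qed.

Lemma coupled_fixpoint_subcritical r : a1 < r <= 0 -> exists m1 m2, coupled_fixpoint r m1 m2.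
Proof.
  intros Hr.
  set (F := fun m => reflection (fun q => f1 q + r * reflection (fun p => f2 p + a2 * m p) q)).
  assert (HFcont : forall m, cont_nonneg m -> cont_nonneg (F m)).
  { intros m Hm. apply reflection_cont, cont_nonneg_affine; [assumption|].
    apply reflection_cont, cont_nonneg_affine; assumption. }
  destruct (contraction_fixpoint F (- r * a2)) as [m1 [Hm1 Efix]].
  - split; nra.
  - exact HFcont.
  - intros m m' T K Hm Hm' Hclose s Hs.
    assert (HK : 0 <= K)
      by (pose proof (Hclose s Hs); pose proof (Rabs_pos (m s - m' s)); lra).
    apply reflection_lipschitz;
      [apply cont_nonneg_affine, reflection_cont, cont_nonneg_affine; assumption..|
       apply Rmult_le_pos; nra|].
    intros q Hq.
    replace (f1 q + r * reflection (fun p => f2 p + a2 * m p) q -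
             (f1 q + r * reflection (fun p => f2 p + a2 * m' p) q))
      with (- r * (reflection (fun p => f2 p + a2 * m' p) q -
                   reflection (fun p => f2 p + a2 * m p) q)) by ring.
    rewrite Rmult_assoc, Rabs_mult, (Rabs_right (- r)) by lra.
    apply Rmult_le_compat_l; [lra|].
    apply reflection_lipschitz; [apply cont_nonneg_affine; assumption..|nra|].
    intros p Hp.
    replace (f2 p + a2 * m' p - (f2 p + a2 * m p)) with (a2 * (m' p - m p)) by ring.
    rewrite Rabs_mult, (Rabs_right a2), Rabs_minus_sym by lra.
    apply Rmult_le_compat_l; [lra|]. apply Hclose; lra.
  - exists m1, (reflection (fun p => f2 p + a2 * m1 p)).
    split; [assumption|]. split; [apply reflection_cont, cont_nonneg_affine; assumption|].
    intros t Ht. split; [apply Efix, Ht|reflexivity].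
Qed.

Lemma critical_approximations_cauchy (rs : nat -> R) (u1 u2 : nat -> R -> R) :
  (forall n, a1 <= rs n <= 0) -> Un_cv rs a1 ->
  (forall n, exists g1 g2, solves (rs n) g1 g2 (u1 n) (u2 n)) ->
  loc_unif_cauchy u1 /\ loc_unif_cauchy u2.
Proof.
  intros Hrs Hcv Hsol.
  assert (Hboth : forall T eps, 0 < eps -> exists N, forall n p, (N <= n)%nat -> (N <= p)%nat ->
            forall s, 0 <= s <= T ->
            Rabs (u1 n s - u1 p s) <= eps /\ Rabs (u2 n s - u2 p s) <= eps).
  { intros T eps Heps. destruct (solutions_stable T eps Heps) as [e [He Hstab]].
    destruct (Hcv e He) as [N HN]. exists N. intros n p Hn Hp s Hs.
    destruct (Hsol n) as [g1 [g2 Hsoln]]. destruct (Hsol p) as [g1' [g2' Hsolp]].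
    pose proof (HN n Hn) as Hrn. pose proof (HN p Hp) as Hrp. unfold Rdist in Hrn, Hrp.
    apply Rabs_lt_iff in Hrn, Hrp.
    destruct (Hstab (rs n) (rs p) g1 g2 (u1 n) (u2 n) g1' g2' (u1 p) (u2 p)
                (Hrs n) (Hrs p) ltac:(lra) ltac:(lra) Hsoln Hsolp s Hs).
    split; lra. }
  split; intros T eps Heps; destruct (Hboth T eps Heps) as [N HN];
    exists N; intros n p Hn Hp s Hs; apply (HN n p Hn Hp s Hs).
Qed.

Lemma coupled_fixpoint_limit rs r u1 u2 M1 M2 : Un_cv rs r ->
  (forall n, coupled_fixpoint (rs n) (u1 n) (u2 n)) ->
  loc_unif_cvg u1 M1 -> loc_unif_cvg u2 M2 -> coupled_fixpoint r M1 M2.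
Proof.
  intros Hcv Hfix L1 L2.
  assert (Hu1 : forall n, cont_nonneg (u1 n)) by (intros n; apply (Hfix n)).
  assert (Hu2 : forall n, cont_nonneg (u2 n)) by (intros n; apply (Hfix n)).
  assert (CM1 : cont_nonneg M1) by (apply (loc_unif_cvg_cont u1); assumption).
  assert (CM2 : cont_nonneg M2) by (apply (loc_unif_cvg_cont u2); assumption).
  assert (Hconst : Un_cv (fun _ => a2) a2).
  { intros eps Heps. exists 0%nat. intros. unfold Rdist. rewrite Rminus_diag, Rabs_R0.
    assumption. }
  split; [assumption|]. split; [assumption|]. intros t Ht. split.
  - apply (reflection_loc_unif_limit (fun n s => f1 s + rs n * u2 n s) _ u1);
      [intros n; apply cont_nonneg_affine; auto|apply cont_nonneg_affine; auto|
       apply loc_unif_cvg_affine; assumption|assumption| |assumption].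
    intros n s Hs. exact (proj1 (proj2 (proj2 (Hfix n)) s Hs)).
  - apply (reflection_loc_unif_limit (fun n s => f2 s + a2 * u1 n s) _ u2);
      [intros n; apply cont_nonneg_affine; auto|apply cont_nonneg_affine; auto|
       apply (loc_unif_cvg_affine f2 (fun _ => a2)); assumption|assumption| |assumption].
    intros n s Hs. exact (proj2 (proj2 (proj2 (Hfix n)) s Hs)).
Qed.

Definition subcritical_entry (n : nat) : R := a1 - a1 / (INR n + 2).

Lemma subcritical_entry_range n : a1 < subcritical_entry n <= 0.
Proof.
  pose proof (pos_INR n).
  assert (Hq : (INR n + 2) * / (INR n + 2) = 1) by (apply Rinv_r; lra).
  pose proof (Rinv_0_lt_compat (INR n + 2) ltac:(lra)).
  unfold subcritical_entry, Rdiv. nra.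
Qed.

Lemma subcritical_entry_cvg : Un_cv subcritical_entry a1.
Proof.
  intros eps Heps. destruct (INR_archimed eps (- a1) Heps) as [N HN].
  exists N. intros n Hn. apply le_INR in Hn. pose proof (pos_INR n).
  assert (Hq : (INR n + 2) * / (INR n + 2) = 1) by (apply Rinv_r; lra).
  pose proof (Rinv_0_lt_compat (INR n + 2) ltac:(lra)).
  unfold Rdist, subcritical_entry, Rdiv. rewrite Rabs_right by nra. nra.
Qed.

Lemma coupled_fixpoint_critical : exists m1 m2, coupled_fixpoint a1 m1 m2.
Proof.
  destruct (choice (fun n (p : (R -> R) * (R -> R)) =>
                      coupled_fixpoint (subcritical_entry n) (fst p) (snd p))) as [u Hu].
  { intros n.
    destruct (coupled_fixpoint_subcritical _ (subcritical_entry_range n)) as [m1 [m2 Hfix]].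
    exists (m1, m2); exact Hfix. }
  destruct (critical_approximations_cauchy subcritical_entry (fun n => fst (u n))
              (fun n => snd (u n))) as [C1 C2].
  - intros n. pose proof (subcritical_entry_range n). lra.
  - exact subcritical_entry_cvg.
  - intros n. do 2 eexists. apply coupled_fixpoint_solves, Hu.
  - destruct (loc_unif_cauchy_cvg _ C1) as [M1 L1].
    destruct (loc_unif_cauchy_cvg _ C2) as [M2 L2].
    exists M1, M2. exact (coupled_fixpoint_limit _ _ _ _ _ _ subcritical_entry_cvg Hu L1 L2).
Qed.

Lemma solution_exists : exists g1 g2 m1 m2, solves a1 g1 g2 m1 m2.
Proof.
  destruct coupled_fixpoint_critical as [m1 [m2 Hfix]].
  do 4 eexists. apply coupled_fixpoint_solves, Hfix.
Qed.

End CriticalSkorokhod.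

Theorem theorem3p2 (a1 a2 : R) :
  Rabs (a1 * a2) = 1 -> 0 < a2 -> a1 < 0 ->
  forall f1 f2 : R -> R, driving f1 f2 ->
    SP_unique_solution 1 a1 a2 1 f1 f2.
Proof.
  intros Habs Ha2 Ha1 f1 f2 Hf.
  assert (Ha12 : a1 * a2 = -1) by (rewrite Rabs_left in Habs by nra; lra).
  split; [apply (solution_exists a1 a2 f1 f2); assumption|].
  intros g1 g2 m1 m2 g1' g2' m1' m2' Hsol Hsol' t Ht.
  destruct (solution_unique a1 a2 f1 f2 Ha1 Ha2 Ha12 Hf _ _ _ _ _ _ _ _ Hsol Hsol' t Ht)
    as [E1 E2].
  destruct Hsol as (_ & _ & _ & _ & _ & _ & _ & _ & _ & Heq & _).
  destruct Hsol' as (_ & _ & _ & _ & _ & _ & _ & _ & _ & Heq' & _).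
  destruct (Heq t Ht) as [G1 G2]. destruct (Heq' t Ht) as [G1' G2'].
  rewrite G1, G2, G1', G2', E1, E2. repeat split.
Qed.
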